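(* Let $\epsilon_{fp},\delta_{fp},\epsilon_{fn},\delta_{fn}\in(0,1)$, $n,m\ge1$, and let $Z_{nm}=(x_1,\dots,x_n)\sim\mathcal D_{nm}^n$ and $Z_{ano}=(x'_1,\dots,x'_m)\sim\mathcal D_{ano}^m$. Let $\hat y_{ad}$ be the combined predictor defined in the context and define its error rate (over non-abstained predictions) $$\mathrm{ERR}=\Pr_{(x,y)\sim\mathcal D}\big(\hat y_{ad}(x)\ne *\ \text{and}\ \hat y_{ad}(x)\ne y\big).$$ Then, with $\epsilon_{ad}=\max(\epsilon_{fp},\epsilon_{fn})$ and $\delta_{ad}=\delta_{fp}+\delta_{fn}$, $$\Pr_{Z_{nm},Z_{ano}}\Big[\hat\tau_{fn}<\hat\tau_{fp}\ \text{ or }\ \mathrm{ERR}\le\epsilon_{ad}\Big]\ \ge\ 1-\delta_{ad},$$ i.e. with probability at least $1-\delta_{ad}$ over the calibration data, whenever $\hat\tau_{fn}\ge\hat\tau_{fp}$ the error rate is at most $\epsilon_{ad}$.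
   Context: Let $\mathcal X$ be a measurable space and $d:\mathcal X\to\mathbb R$ a fixed measurable anomaly-score function (independent of the calibration data). Let $\mathcal D$ be a distribution on $\mathcal X\times\{0,1\}$ (label $1$ = anomaly, $0$ = normal) with $0<\Pr(y=1)<1$; $\mathcal D_{nm}$ and $\mathcal D_{ano}$ are the conditional distributions of $x$ given $y=0$ and $y=1$. Assume the distributions of $d(x)$ under $\mathcal D_{nm}$ and under $\mathcal D_{ano}$ have no atoms. For $N\ge1$, $\epsilon,\delta\in(0,1)$: $F(k;N,\epsilon)=\sum_{i=0}^{k}\binom{N}{i}\epsilon^i(1-\epsilon)^{N-i}$, $F(-1;N,\epsilon)=0$, $k^*(N,\epsilon,\delta)=\max\{k\in\{-1,\dots,N\}:F(k;N,\epsilon)\le\delta\}$. Let $k^*_{fp}=k^*(n,\epsilon_{fp},\delta_{fp})$, $\hat\tau_{fp}$ = the $(k^*_{fp}+1)$-th largest of $d(x_1),\dots,d(x_n)$ ($0$-th largest $=+\infty$); $k^*_{fn}=k^*(m,\epsilon_{fn},\delta_{fn})$, $\hat\tau_{fn}$ = the $(k^*_{fn}+1)$-th smallest of $d(x'_1),\dots,d(x'_m)$ ($0$-th smallest $=-\infty$). Prediction sets: $C_{\hat\tau_{fp}}(x)=\{1\}$ if $d(x)\ge\hat\tau_{fp}$, else $\{0,1\}$; $C_{\hat\tau_{fn}}(x)=\{0,1\}$ if $d(x)\ge\hat\tau_{fn}$, else $\{0\}$. Combined set $C_{ad}(x)=C_{\hat\tau_{fn}}(x)\cap C_{\hat\tau_{fp}}(x)$,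 and $\hat y_{ad}(x)=1$ if $C_{ad}(x)=\{1\}$, $\hat y_{ad}(x)=0$ if $C_{ad}(x)=\{0\}$, and $\hat y_{ad}(x)=*$ (abstain) otherwise. *)

From mathcomp Require Import all_boot all_order all_algebra.
From mathcomp Require Import all_classical all_reals all_analysis.
Set Implicit Arguments. Unset Strict Implicit. Unset Printing Implicit Defensive.
Import Order.TTheory GRing.Theory Num.Theory.
Local Open Scope classical_set_scope.
Local Open Scope ring_scope.

Section Defs.
Context {R : realType}.

Definition binom_cdf (N : nat) (eps : R) (k : int) : R :=
  match k with
  | Posz k' => \sum_(0 <= i < k'.+1) ('C(N, i))%:R * eps ^+ i * (1 - eps) ^+ (N - i)
  | Negz _ => 0
  end.

(* kstar1 N eps delta = k^*(N, eps, delta) + 1, where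
   k^* = max { k in {-1, ..., N} : F(k; N, eps) <= delta }.
   The index j = k + 1 ranges over {0, ..., N+1}; j = 0 (k = -1) always
   qualifies since F(-1) = 0 <= delta. *)
Definition kstar1 (N : nat) (eps delta : R) : nat :=
  \big[maxn/0%N]_(j < N.+2 | (binom_cdf N eps (j%:Z - 1)%R <= delta)%R) (j : nat).

(* j-th largest / j-th smallest element of a finite list of reals, with the
   conventions 0-th largest = +oo and 0-th smallest = -oo.
   (For j > size s the value is irrelevant: never used since k^* < N.) *)
Definition kth_largest (s : seq R) (j : nat) : \bar R :=
  if j is j'.+1 then (nth 0 (sort (fun x y : R => y <= x) s) j')%:E else +oo%E.
Definition kth_smallest (s : seq R) (j : nat) : \bar R :=
  if j is j'.+1 then (nth 0 (sort (fun x y : R => x <= y) s) j')%:E else -oo%E.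

Context {dX : measure_display} {X : measurableType dX}.

Definition tau_fp (sc : X -> R) (n : nat) (xs : 'I_n -> X) (eps delta : R) : \bar R :=
  kth_largest [seq sc (xs i) | i <- enum 'I_n] (kstar1 n eps delta).

Definition tau_fn (sc : X -> R) (m : nat) (xs : 'I_m -> X) (eps delta : R) : \bar R :=
  kth_smallest [seq sc (xs j) | j <- enum 'I_m] (kstar1 m eps delta).

(* Labels: true = 1 = anomaly, false = 0 = normal. *)
Definition C_fp (sc : X -> R) (tfp : \bar R) (x : X) : {set bool} :=
  if (tfp <= (sc x)%:E)%E then [set true]%SET else [set: bool]%SET.
Definition C_fn (sc : X -> R) (tfn : \bar R) (x : X) : {set bool} :=
  if (tfn <= (sc x)%:E)%E then [set: bool]%SET else [set false]%SET.
Definition C_ad sc tfn tfp (x : X) : {set bool} := (C_fn sc tfn x :&: C_fp sc tfp x)%SET.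

(* Some b = predicted label b; None = abstain ( * ). *)
Definition yhat_ad sc tfn tfp (x : X) : option bool :=
  if C_ad sc tfn tfp x == [set true]%SET then Some true
  else if C_ad sc tfn tfp x == [set false]%SET then Some false
  else None.

Definition ERR (D : probability (X * bool)%type R) sc tfn tfp : \bar R :=
  D [set p : X * bool | yhat_ad sc tfn tfp p.1 <> None /\
                        yhat_ad sc tfn tfp p.1 <> Some p.2].

(* Conditional distribution of x given y = b:  D_nm = Dcond D false,
   D_ano = Dcond D true. *)
Definition Dcond (D : probability (X * bool)%type R) (b : bool) (A : set X) : \bar R :=
  (fine (D (A `*` [set b])) / fine (D ([set: X] `*` [set b])))%:E.

(* (Z_1..Z_n, Z'_1..Z'_m) defined on (Omega, P) are mutually independent,
   Z_i ~ D_nm and Z'_j ~ D_ano, i.e. their joint law is D_nm^n (x) D_ano^m. *)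
Definition iid_calibration {dO : measure_display} {Omega : measurableType dO}
    (P : probability Omega R) (D : probability (X * bool)%type R)
    (n m : nat) (Z : 'I_n -> Omega -> X) (Z' : 'I_m -> Omega -> X) : Prop :=
  (forall i, measurable_fun setT (Z i)) /\
  (forall j, measurable_fun setT (Z' j)) /\
  forall (A : 'I_n -> set X) (B : 'I_m -> set X),
    (forall i, measurable (A i)) -> (forall j, measurable (B j)) ->
    P ((\bigcap_(i in [set: 'I_n]) (Z i @^-1` A i)) `&`
       (\bigcap_(j in [set: 'I_m]) (Z' j @^-1` B j))) =
    ((\prod_(i < n) Dcond D false (A i)) * (\prod_(j < m) Dcond D true (B j)))%E.

End Defs.

From HB Require Import structures.
From mathcomp Require Import all_boot all_order all_algebra.
From mathcomp Require Import all_classical all_reals all_analysis.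
From mathcomp Require Import measurable_realfun zify lra.
Import Order.TTheory GRing.Theory Num.Theory.
Local Open Scope classical_set_scope.
Local Open Scope ring_scope.

(* Without atoms, the tail t |-> mu [set x | t <= d x] of the normal scores
   takes the value eps_fp at some level ts. The number of calibration scores
   at least ts is then Binomial(n, eps_fp), so the event that at most k^* of
   them reach ts has probability F(k^*; n, eps_fp) <= delta_fp; off this
   event the (k^* + 1)-th largest score is at least ts, whence a false-positive
   rate of at most eps_fp. The false-negative threshold is the same statement
   for the score -d. Off both bad events, the combined predictor only errs on
   a normal point above tau_fp or an anomaly below tau_fn, so its error is a
   convex combination of the two rates, whatever the order of the thresholds. *)

Lemma count_le_nth_sort {d : Order.disp_t} {T : orderType d} (x0 t : T)
    (s : seq T) (J : nat) :
  (0 < J)%N -> (J <= count (fun x => t <= x)%O s)%N ->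
  (t <= nth x0 (sort (fun x y => y <= x)%O s) J.-1)%O.
Proof.
move=> J_gt0 J_le_count; set s' := sort _ s.
have s'_sorted : sorted (fun x y => y <= x)%O s'.
  by apply: sort_sorted => x y; exact: le_total.
have ge_trans : transitive (fun x y : T => y <= x)%O.
  by move=> x y z xy yz; exact: le_trans yz xy.
have J_size : (J.-1 < size s')%N.
  by rewrite size_sort prednK // (leq_trans J_le_count (count_size _ _)).
rewrite leNgt; apply/negP => nth_lt.
suff : (count (fun x => t <= x)%O s' <= J.-1)%N by rewrite count_sort; lia.
have /allP tail_le : all (fun y => y <= nth x0 s' J.-1)%O (drop J.-1.+1 s').
  have := subseq_sorted ge_trans (drop_subseq s' J.-1) s'_sorted.
  by rewrite (drop_nth x0 J_size) /=; exact: order_path_min.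
rewrite -(cat_take_drop J.-1 s') count_cat (drop_nth x0 J_size) /= leNgt nth_lt.
rewrite [count _ (drop _ _)](eq_in_count (a2 := pred0)) ?count_pred0 ?add0n ?addn0; last first.
  by move=> y /tail_le y_le /=; apply/negbTE; rewrite -ltNge (le_lt_trans y_le).
by have := count_size (fun x => t <= x)%O (take J.-1 s'); rewrite size_take J_size.
Qed.

Lemma kth_smallestN {R : realType} (s : seq R) (j : nat) :
  kth_smallest s j = (- kth_largest [seq (- x)%R | x <- s] j)%E.
Proof.
case: j => [//|j]; rewrite /kth_smallest /kth_largest sort_map /=.
have -> : sort (relpre -%R (fun x y : R => y <= x)) s = sort <=%R s.
  by congr sort; apply/funext => x; apply/funext => y; rewrite /= lerN2.
case: (ltnP j (size s)) => [j_lt|j_ge]; first by rewrite (nth_map 0) ?size_sort ?opprK.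
by rewrite !nth_default ?size_map ?size_sort // oppr0.
Qed.

Lemma kstar1_spec {R : realType} (N : nat) (eps delta : R) :
  kstar1 N eps delta = 0%N \/
  binom_cdf N eps ((kstar1 N eps delta)%:Z - 1) <= delta.
Proof.
rewrite /kstar1; elim/big_ind: _ => [|x y|j]; [by left | | by right].
by rewrite /maxn; case: ltnP.
Qed.

Section ConditionalMeasure.
Local Open Scope ereal_scope.
Context {R : realType} {dX : measure_display} {X : measurableType dX}.
Variables (D : probability (X * bool)%type R) (b : bool).

Let class_mass := fine (D ([set: X] `*` [set b])).

Definition condm (A : set X) : \bar R := (class_mass^-1)%:E * D (A `*` [set b]).

Let condm0 : condm set0 = 0.
Proof. by rewrite /condm set0X measure0 mule0. Qed.

Let condm_ge0 A : 0 <= condm A.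
Proof. by rewrite /condm mule_ge0// lee_fin invr_ge0 fine_ge0. Qed.

Let condm_sigma_additive : semi_sigma_additive condm.
Proof.
move=> F mF tF mUF; rewrite /condm.
under eq_fun do rewrite -ge0_sume_distrr//; rewrite setX_bigcupl.
apply: cvgeZl => //; apply: measure_semi_sigma_additive.
- by move=> i; exact: measurableX.
- apply/trivIsetP => i j _ _ ij; move/trivIsetP : tF => /(_ i j I I ij) Fij.
  apply/seteqP; split=> // -[x y] [[Fix _] [Fjx _]].
  by move/seteqP: Fij => -[/(_ x (conj Fix Fjx))].
- by rewrite -setX_bigcupl; exact: measurableX.
Qed.

HB.instance Definition _ := isMeasure.Build _ _ _ condm
  condm0 condm_ge0 condm_sigma_additive.

Lemma measureX_condm A : 0 < D ([set: X] `*` [set b]) ->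
  D (A `*` [set b]) = class_mass%:E * condm A.
Proof.
move=> mass_gt0; rewrite /condm /class_mass muleA -EFinM mulfV ?mul1e//.
by rewrite gt_eqF// -lte_fin fineK ?fin_num_measure//; exact: measurableX.
Qed.

Lemma condm_setT : 0 < D ([set: X] `*` [set b]) -> condm setT = 1.
Proof.
move=> mass_gt0; have mass_fin : D ([set: X] `*` [set b]) \is a fin_num.
  by rewrite fin_num_measure//; exact: measurableX.
rewrite /condm /class_mass -[D _](fineK mass_fin) -EFinM mulVf//.
by rewrite gt_eqF// -lte_fin fineK.
Qed.

Lemma Dcond_condm A : measurable A -> Dcond D b A = condm A.
Proof.
move=> mA; rewrite /Dcond /condm -[D (A `*` _)]fineK ?fin_num_measure//.
  by rewrite -EFinM mulrC.
exact: measurableX.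
Qed.

End ConditionalMeasure.

Lemma exists_natSinv_lt {R : archiRealFieldType} (e : R) : 0 < e ->
  exists k : nat, k.+1%:R^-1 < e.
Proof.
move=> e_gt0; exists (Num.Def.truncn e^-1).
by rewrite -[ltRHS]invrK ltf_pV2 ?posrE ?invr_gt0// truncnS_gt.
Qed.

Lemma cvg_lee_lbound {R : realType} (u : nat -> \bar R) (l x : \bar R) :
  u n @[n --> \oo] --> l -> (forall n, (x <= u n)%E) -> (x <= l)%E.
Proof.
move=> u_l x_le; rewrite -(cvg_lim _ u_l)//.
by apply: lime_ge; [apply/cvg_ex; exists l | exact: nearW].
Qed.

Lemma cvg_lee_ubound {R : realType} (u : nat -> \bar R) (l x : \bar R) :
  u n @[n --> \oo] --> l -> (forall n, (u n <= x)%E) -> (l <= x)%E.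
Proof.
move=> u_l le_x; rewrite -(cvg_lim _ u_l)//.
by apply: lime_le; [apply/cvg_ex; exists l | exact: nearW].
Qed.

Section MeasurableLevelSets.
Context {R : realType} {dX : measure_display} {X : measurableType dX}.
Context {sc : X -> R}.
Hypothesis msc : measurable_fun setT sc.

Lemma measurable_ge (t : R) : measurable [set x | t <= sc x].
Proof.
rewrite [X in measurable X](_ : _ = setT `&` sc @^-1` `[t, +oo[); first exact: msc.
by apply/seteqP; split=> x /=; rewrite in_itv/= andbT// => -[].
Qed.

Lemma measurable_lee (e : \bar R) : measurable [set x | (e <= (sc x)%:E)%E].
Proof.
case: e => [t| |].
- by under eq_set do rewrite lee_fin; exact: measurable_ge.
- rewrite [X in measurable X](_ : _ = set0)//.
  by apply/seteqP; split=> x //=; rewrite leNgt ltey.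
- rewrite [X in measurable X](_ : _ = setT)//.
  by apply/seteqP; split=> x //= _; exact: leNye.
Qed.

Lemma measurable_lte (e : \bar R) : measurable [set x | ((sc x)%:E < e)%E].
Proof.
rewrite [X in measurable X](_ : _ = ~` [set x | (e <= (sc x)%:E)%E]).
  exact/measurableC/measurable_lee.
by apply/seteqP; split=> x /=; rewrite ltNge => /negP.
Qed.

End MeasurableLevelSets.

Definition survival {R : realType} {dX : measure_display} {X : measurableType dX}
  (mu : {measure set X -> \bar R}) (sc : X -> R) (t : R) : \bar R :=
  mu [set x | t <= sc x].

Section Survival.
Local Open Scope ereal_scope.
Context {R : realType} {dX : measure_display} {X : measurableType dX}.
Context {mu : {measure set X -> \bar R}} {sc : X -> R}.
Hypotheses (msc : measurable_fun setT sc) (mu_setT : mu setT = 1).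
Local Notation survival := (survival mu sc).

Lemma le_survival (t1 t2 : R) : (t1 <= t2)%R -> survival t2 <= survival t1.
Proof.
move=> t12; apply: le_measure; rewrite ?inE; try exact: measurable_ge.
by move=> x /=; exact: le_trans.
Qed.

Lemma survival_lty t : survival t < +oo.
Proof.
rewrite (le_lt_trans _ (ltey 1))// -mu_setT.
by apply: le_measure; rewrite ?inE//; exact: measurable_ge.
Qed.

Lemma exists_survival_lt (eps : R) : (0 < eps)%R -> exists M, survival M < eps%:E.
Proof.
move=> eps_gt0; apply: contrapT => /forallNP survival_ge.
pose F k : set X := [set x | (k%:R <= sc x)%R].
have capF : \bigcap_k F k = set0.
  apply/seteqP; split=> // x /(_ (Num.Def.truncn (sc x)).+1 I).
  by rewrite /F /= leNgt truncnS_gt.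
have : eps%:E <= mu (\bigcap_k F k).
  apply: cvg_lee_lbound (nonincreasing_cvg_mu _ _ _ _) _.
  - exact: survival_lty.
  - by move=> k; exact: measurable_ge.
  - by rewrite capF.
  - by move=> i j ij; apply/subsetPset => x /=; apply: le_trans; rewrite ler_nat.
  - by move=> k; rewrite leNgt; apply/negP/survival_ge.
by rewrite capF measure0 lee_fin leNgt eps_gt0.
Qed.

Lemma survival_ge_left (ts : R) (e : \bar R) :
  (forall t, (t < ts)%R -> e <= survival t) -> e <= survival ts.
Proof.
move=> ge_left; pose F k : set X := [set x | (ts - k.+1%:R^-1 <= sc x)%R].
have capF : \bigcap_k F k = [set x | (ts <= sc x)%R].
  apply/seteqP; split=> x /=; last first.
    by move=> ts_le k _; apply: le_trans ts_le; rewrite gerBl invr_ge0.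
  move=> F_x; rewrite leNgt; apply/negP; rewrite -subr_gt0 => /exists_natSinv_lt[k].
  by have := F_x k I; rewrite /F /= lerBlDr -lerBlDl leNgt => /negP.
rewrite /survival -capF; apply: cvg_lee_lbound (nonincreasing_cvg_mu _ _ _ _) _.
- exact: survival_lty.
- by move=> k; exact: measurable_ge.
- by rewrite capF; exact: measurable_ge.
- move=> i j ij; apply/subsetPset => x /=; apply: le_trans.
  by rewrite lerD2l lerN2 lef_pV2 ?posrE// ler_nat.
- by move=> k; apply: ge_left; rewrite gtrBl invr_gt0.
Qed.

Hypothesis atomless : forall r, mu (sc @^-1` [set r]) = 0.

Lemma survival_le_right (ts : R) (e : \bar R) :
  (forall t, (ts < t)%R -> survival t <= e) -> survival ts <= e.
Proof.
move=> le_right; pose F k : set X := [set x | (ts + k.+1%:R^-1 <= sc x)%R].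
have cupF : \bigcup_k F k = [set x | (ts < sc x)%R].
  apply/seteqP; split=> x /=.
    by move=> [k _]; apply: lt_le_trans; rewrite ltrDl invr_gt0.
  rewrite -subr_gt0 => /exists_natSinv_lt[k k_lt]; exists k => //.
  by rewrite /F /= -lerBrDl ltW.
have mF k : measurable (F k) by exact: measurable_ge.
have mcupF : measurable (\bigcup_k F k) by exact: bigcupT_measurable.
have m_ts : measurable (sc @^-1` [set ts]).
  by rewrite -[X in measurable X]setTI; exact: msc.
have ge_split : [set x | (ts <= sc x)%R] `<=` \bigcup_k F k `|` sc @^-1` [set ts].
  by rewrite cupF => x /=; rewrite le_eqVlt => /orP[/eqP ->|]; [right|left].
apply: (le_trans (le_measure _ _ _ ge_split)); rewrite ?inE.
- exact: measurable_ge.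
- exact: measurableU.
apply: (le_trans (measureU2 mu mcupF m_ts)); rewrite [X in _ + X]atomless adde0.
apply: cvg_lee_ubound (nondecreasing_cvg_mu mF mcupF _) _.
- move=> i j ij; apply/subsetPset => x /=; apply: le_trans.
  by rewrite lerD2l lef_pV2 ?posrE// ler_nat.
- by move=> k; apply: le_right; rewrite ltrDl invr_gt0.
Qed.

Lemma survival_level (eps : R) : (0 < eps)%R ->
  (forall t, survival t <= eps%:E) \/
  exists ts, survival ts = eps%:E /\ forall t, (ts <= t)%R -> survival t <= eps%:E.
Proof.
move=> eps_gt0; have [|/existsNP[t0 /negP]] := pselect (forall t, survival t <= eps%:E).
  by left.
rewrite -ltNge => t0_gt; right.
(* The level is the supremum of the levels where the tail exceeds eps;
   atomlessness gives right continuity, monotone convergence left continuity. *)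
pose A := [set t | eps%:E < survival t].
have [M M_lt] := exists_survival_lt _ eps_gt0.
have A_ub : ubound A M.
  move=> t /= At; rewrite leNgt; apply/negP => /ltW /le_survival.
  by rewrite leNgt (lt_trans M_lt At).
have A_sup : has_sup A by split; [exists t0 | exists M].
have below t : (t < sup A)%R -> A t.
  rewrite -subr_gt0 => t_lt; have [s As t_s] := sup_adherent t_lt A_sup.
  by apply: lt_le_trans As _; apply/le_survival/ltW; move: t_s; rewrite subKr.
have above t : (sup A < t)%R -> survival t <= eps%:E.
  move=> sup_lt; rewrite leNgt; apply/negP => At.
  by have := sup_upper_bound A_sup At; rewrite leNgt sup_lt.
have sup_le : survival (sup A) <= eps%:E by exact: survival_le_right.
exists (sup A); split.
  by apply/le_anti; rewrite sup_le survival_ge_left// => t /below /ltW.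
by move=> t; rewrite le_eqVlt => /orP[/eqP <-|/above].
Qed.

End Survival.

Lemma sum_set_card_le {V : nmodType} (n k : nat) (f : nat -> V) :
  \sum_(S : {set 'I_n} | (#|S| <= k)%N) f #|S| = \sum_(i < k.+1) f i *+ 'C(n, i).
Proof.
transitivity (\sum_(S : {set 'I_n}) \sum_(i < k.+1 | #|S| == i) f i).
  rewrite big_mkcond; apply: eq_bigr => S _; case: leqP => [S_le|S_gt].
    by rewrite (big_pred1 (Ordinal (S_le : #|S| < k.+1)%N)).
  rewrite big_pred0// => i; apply/negbTE; move: (ltn_ord i).
  by apply: contraTneq => <-; rewrite -leqNgt.
under eq_bigr do rewrite big_mkcond; rewrite exchange_big; apply: eq_bigr => i _.
rewrite -big_mkcond /= sumr_const; congr (_ *+ _).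
by rewrite -[n in 'C(n, _)]card_ord -card_draws; apply: eq_card => S; rewrite !inE.
Qed.

Lemma prodr_if_mem {V : comPzSemiRingType} (n : nat) (S : {set 'I_n}) (p q : V) :
  \prod_(i < n) (if i \in S then p else q) = p ^+ #|S| * q ^+ (n - #|S|).
Proof.
rewrite (bigID (mem S)) /= (eq_bigr (fun=> p)) => [|i ->//].
rewrite [X in _ * X](eq_bigr (fun=> q)) => [|i /negbTE ->//].
rewrite !prodr_const; congr (_ * _ ^+ _).
have := cardsC S; rewrite card_ord => cardSC.
by rewrite -[X in (X - _)%N]cardSC addKn; apply: eq_card => i; rewrite !inE.
Qed.

Definition hits {dX : measure_display} {X : measurableType dX}
    {dO : measure_display} {Omega : measurableType dO} {n : nat}
    (Z : 'I_n -> Omega -> X) (U : set X) (w : Omega) : {set 'I_n} :=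
  [set i | `[< U (Z i w) >]]%SET.

Section BinomialCount.
Context {R : realType} {dX : measure_display} {X : measurableType dX}.
Context {dO : measure_display} {Omega : measurableType dO}.
Context (P : probability Omega R) {mu : {measure set X -> \bar R}}.
Context {n : nat} {Z : 'I_n -> Omega -> X}.
Hypotheses (mu_setT : mu setT = 1%E) (mZ : forall i, measurable_fun setT (Z i)).
Hypothesis Z_iid : forall A : 'I_n -> set X, (forall i, measurable (A i)) ->
  P (\bigcap_(i in [set: 'I_n]) (Z i @^-1` A i)) = (\prod_(i < n) mu (A i))%E.
Context {U : set X} {p : R}.
Hypotheses (mU : measurable U) (muU : mu U = p%:E).

Local Notation hits := (hits Z U).

Let hits_eq (S : {set 'I_n}) : set Omega :=
  \bigcap_(i in [set: 'I_n]) (Z i @^-1` (if i \in S then U else ~` U)).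

Let hits_eqP S w : hits_eq S w <-> hits w = S.
Proof.
split=> [hitsS|<- i _]; last by rewrite /= inE; case: asboolP.
apply/setP => i; rewrite inE; have := hitsS i I.
by case: (i \in S) => /= ?; apply/asboolP.
Qed.

Let measurable_hits_eq S : measurable (hits_eq S).
Proof.
apply: fin_bigcap_measurable; first exact: finite_finset.
move=> i _; rewrite -[X in measurable X]setTI; apply: mZ => //.
by case: (i \in S) => //; exact: measurableC.
Qed.

Let mu_setC : mu (~` U) = (1 - p)%:E.
Proof.
have : mu (U `|` ~` U) = (mu U + mu (~` U))%E.
  by apply: measureU => //; [exact: measurableC | rewrite setICr].
rewrite setUCr mu_setT muU -[mu (~` U)]fineK.
  by move/eqP; rewrite -EFinD eqe => /eqP ->; rewrite addrC addKr.
rewrite ge0_fin_numE// (le_lt_trans _ (ltey 1%E))// -mu_setT.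
by apply: le_measure; rewrite ?inE//; exact: measurableC.
Qed.

Let prob_hits_eq S : P (hits_eq S) = (p ^+ #|S| * (1 - p) ^+ (n - #|S|))%:E.
Proof.
rewrite Z_iid => [|i]; last by case: (i \in S) => //; exact: measurableC.
by rewrite -prodr_if_mem -prodEFin; apply: eq_bigr => i _; case: (i \in S).
Qed.

Lemma prob_hits_le (k : nat) :
  measurable [set w | (#|hits w| <= k)%N] /\
  P [set w | (#|hits w| <= k)%N] = (binom_cdf n p k)%:E.
Proof.
pose small := [set S : {set 'I_n} | (#|S| <= k)%N].
have -> : [set w | (#|hits w| <= k)%N] = \bigcup_(S in small) hits_eq S.
  apply/seteqP; split=> w /=; first by exists (hits w) => //; exact/hits_eqP.
  by move=> [S small_S /hits_eqP ->].
have small_fin : finite_set small by exact: finite_finset.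
split; first by apply: fin_bigcup_measurable => // S _; exact: measurable_hits_eq.
rewrite measure_fin_bigcup//; last first.
  apply/trivIsetP => S S' _ _ /eqP SS'; apply/seteqP; split=> // w.
  by move=> [/hits_eqP hS /hits_eqP hS']; apply: SS'; rewrite -hS -hS'.
rewrite fsbig_mkcond (fsbigE (enum {: {set 'I_n}})) ?enum_uniq//=; last first.
  by move=> S _; rewrite mem_enum.
rewrite (eq_bigl xpredT) => [|S]; last by rewrite in_setT.
rewrite big_enum /= (eq_bigr (fun S : {set 'I_n} => if (#|S| <= k)%N then
    (p ^+ #|S| * (1 - p) ^+ (n - #|S|))%:E else 0%E)) => [|S _]; last first.
  rewrite /patch; case: ifPn => [/set_mem S_small|/negP S_big].
    by rewrite S_small prob_hits_eq.
  by case: ifP => // S_small; case: S_big; exact: mem_set.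
rewrite -big_mkcondr /=.
rewrite sumEFin (sum_set_card_le n k (fun i => p ^+ i * (1 - p) ^+ (n - i))) /binom_cdf big_mkord.
by congr _%:E; apply: eq_bigr => i _; rewrite -mulrA mulr_natl.
Qed.

End BinomialCount.

Lemma card_set_count {n : nat} (p : pred 'I_n) :
  #|[set i | p i]%SET| = count p (enum 'I_n).
Proof. by rewrite enumT cardE /enum_mem size_filter; apply: eq_count => i; rewrite !inE. Qed.

Lemma tau_fnE {R : realType} {dX : measure_display} {X : measurableType dX}
    (sc : X -> R) (m : nat) (xs : 'I_m -> X) (eps delta : R) :
  tau_fn sc xs eps delta = (- tau_fp (fun x => (- sc x)%R) xs eps delta)%E.
Proof. by rewrite /tau_fn /tau_fp kth_smallestN -map_comp. Qed.

Section ThresholdTails.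
Context {R : realType} {dX : measure_display} {X : measurableType dX}.
Context {dO : measure_display} {Omega : measurableType dO}.
Context (P : probability Omega R) {mu : {measure set X -> \bar R}}.
Context {n : nat} {Z : 'I_n -> Omega -> X}.
Hypotheses (mu_setT : mu setT = 1%E) (mZ : forall i, measurable_fun setT (Z i)).
Hypothesis Z_iid : forall A : 'I_n -> set X, (forall i, measurable (A i)) ->
  P (\bigcap_(i in [set: 'I_n]) (Z i @^-1` A i)) = (\prod_(i < n) mu (A i))%E.

Lemma tau_fp_tail (sc : X -> R) (eps delta : R) :
  measurable_fun setT sc -> (forall r, mu (sc @^-1` [set r]) = 0%E) ->
  0 < eps -> 0 <= delta ->
  exists B : set Omega, [/\ measurable B, (P B <= delta%:E)%E &
    forall w, ~ B w ->
      (mu [set x | (tau_fp sc (Z^~ w) eps delta <= (sc x)%:E)%E] <= eps%:E)%E].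
Proof.
move=> msc atomless eps_gt0 delta_ge0.
pose tail_ok w := (mu [set x | (tau_fp sc (Z^~ w) eps delta <= (sc x)%:E)%E] <= eps%:E)%E.
have always_ok : (forall w, tail_ok w) -> exists B : set Omega,
    [/\ measurable B, (P B <= delta%:E)%E & forall w, ~ B w -> tail_ok w].
  by move=> ok; exists set0; split=> //; rewrite measure0 lee_fin.
case kstar_eq : (kstar1 n eps delta) => [|J].
  apply: always_ok => w; rewrite /tail_ok /tau_fp kstar_eq /=.
  rewrite [X in mu X](_ : _ = set0) ?measure0 ?lee_fin ?ltW//.
  by apply/seteqP; split=> x //=; rewrite leNgt ltey.
(* [kstar1] is k^* + 1: here k^* = J. *)
have := kstar1_spec n eps delta; rewrite kstar_eq => -[//|].
rewrite -addn1 PoszD addrK => cdf_le.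
have [all_le|[ts [surv_ts ts_le]]] := survival_level msc mu_setT atomless _ eps_gt0.
  apply: always_ok => w; rewrite /tail_ok /tau_fp kstar_eq /=.
  by under eq_set do rewrite lee_fin; exact: all_le.
have [mB PB] := prob_hits_le P mu_setT mZ Z_iid (measurable_ge msc ts) surv_ts J.
exists [set w | (#|hits Z [set x | (ts <= sc x)%R] w| <= J)%N]; split=> //.
  by rewrite PB lee_fin.
move=> w /negP; rewrite -ltnNge => many_hits.
rewrite /tail_ok /tau_fp kstar_eq /=; under eq_set do rewrite lee_fin.
apply: ts_le; apply: (count_le_nth_sort _ _ _ J.+1) => //.
suff -> : count (fun x => ts <= x) [seq sc (Z i w) | i <- enum 'I_n] =
  #|hits Z [set x | (ts <= sc x)%R] w| by [].
by rewrite count_map -card_set_count; apply: eq_card => i; rewrite !inE asboolb.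
Qed.

Lemma tau_fn_tail (sc : X -> R) (eps delta : R) :
  measurable_fun setT sc -> (forall r, mu (sc @^-1` [set r]) = 0%E) ->
  0 < eps -> 0 <= delta ->
  exists B : set Omega, [/\ measurable B, (P B <= delta%:E)%E &
    forall w, ~ B w ->
      (mu [set x | ((sc x)%:E < tau_fn sc (Z^~ w) eps delta)%E] <= eps%:E)%E].
Proof.
move=> msc atomless eps_gt0 delta_ge0.
have mNsc : measurable_fun setT (fun x => - sc x) by exact: measurable_funN.
have Natomless r : mu ((fun x => - sc x) @^-1` [set r]) = 0%E.
  rewrite -(atomless (- r)); congr (mu _).
  by apply/seteqP; split=> x /= h; [rewrite -h opprK | rewrite h opprK].
have [B [mB PB tail_ok]] := tau_fp_tail _ _ _ mNsc Natomless eps_gt0 delta_ge0.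
exists B; split=> // w /tail_ok; apply: le_trans; apply: le_measure; rewrite ?inE.
- exact: measurable_lte.
- exact: measurable_lee.
by move=> x /=; rewrite tau_fnE lteNr EFinN => /ltW.
Qed.

End ThresholdTails.

Section Predictor.
Context {R : realType} {dX : measure_display} {X : measurableType dX}.
Implicit Types (sc : X -> R) (tfn tfp : \bar R).

Lemma yhat_adE sc tfn tfp x :
  yhat_ad sc tfn tfp x =
  if (tfp <= (sc x)%:E)%E && (tfn <= (sc x)%:E)%E then Some true
  else if ~~ (tfp <= (sc x)%:E)%E && ~~ (tfn <= (sc x)%:E)%E then Some false
  else None.
Proof.
have neq_set (A B : {set bool}) y : (y \in A) != (y \in B) -> (A == B) = false.
  by move=> yAB; apply/negbTE; apply: contraNneq yAB => ->.
rewrite /yhat_ad /C_ad /C_fn /C_fp.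
case: (tfp <= _)%E; case: (tfn <= _)%E => /=.
- by rewrite finset.setTI eqxx.
- by rewrite (neq_set _ _ true) ?inE// (neq_set _ _ false) ?inE.
- by rewrite (neq_set _ _ false) ?inE// (neq_set _ _ true) ?inE.
- by rewrite (neq_set _ _ false) ?inE// finset.setIT eqxx.
Qed.

Lemma class_masses_sum1 (D : probability (X * bool)%type R) :
  fine (D ([set: X] `*` [set false])) + fine (D ([set: X] `*` [set true])) = 1.
Proof.
apply: EFin_inj; rewrite EFinD !fineK ?fin_num_measure//; try exact: measurableX.
rewrite -measureU; [|exact: measurableX|exact: measurableX|].
  rewrite -(probability_setT D); congr (D _).
  by apply/seteqP; split=> // -[x []] _ /=; [right|left].
by apply/seteqP; split=> // -[x y] /= [[_ ->] [_]].
Qed.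

Lemma ad_error_setE sc tfn tfp :
  [set p : X * bool | yhat_ad sc tfn tfp p.1 <> None /\
                      yhat_ad sc tfn tfp p.1 <> Some p.2] =
  ([set x | (tfp <= (sc x)%:E)%E] `&` [set x | (tfn <= (sc x)%:E)%E]) `*` [set false] `|`
  ([set x | ((sc x)%:E < tfp)%E] `&` [set x | ((sc x)%:E < tfn)%E]) `*` [set true].
Proof.
apply/seteqP; split=> -[x y] /=; rewrite yhat_adE /= !ltNge.
  by case: (tfp <= _)%E; case: (tfn <= _)%E; case: y => //= -[]; first [by left | by right].
by case: (tfp <= _)%E; case: (tfn <= _)%E; case: y => //= -[] [[? ?] ?].
Qed.

Lemma ERR_le_max (D : probability (X * bool)%type R) sc tfn tfp (e0 e1 : R) :
  measurable_fun setT sc ->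
  (0 < D ([set: X] `*` [set false]))%E -> (0 < D ([set: X] `*` [set true]))%E ->
  (condm D false [set x | (tfp <= (sc x)%:E)%E] <= e0%:E)%E ->
  (condm D true [set x | ((sc x)%:E < tfn)%E] <= e1%:E)%E ->
  (ERR D sc tfn tfp <= (Num.max e0 e1)%:E)%E.
Proof.
move=> msc normal_gt0 anomal_gt0 fp_le fn_le; rewrite /ERR ad_error_setE.
set Sfp := [set x | (tfp <= (sc x)%:E)%E]; set Sfn := [set x | ((sc x)%:E < tfn)%E].
set Sfn' := [set x | (tfn <= (sc x)%:E)%E]; set Sfp' := [set x | ((sc x)%:E < tfp)%E].
have mfp : measurable Sfp by exact: measurable_lee.
have mfn : measurable Sfn by exact: measurable_lte.
have mfn' : measurable Sfn' by exact: measurable_lee.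
have mfp' : measurable Sfp' by exact: measurable_lte.
have mX (A : set X) (b : bool) : measurable A -> measurable (A `*` [set b]).
  by move=> mA; apply: measurableX.
have m_err0 : measurable ((Sfp `&` Sfn') `*` [set false]) by apply: mX; exact: measurableI.
have m_err1 : measurable ((Sfp' `&` Sfn) `*` [set true]) by apply: mX; exact: measurableI.
apply: (le_trans (measureU2 _ m_err0 m_err1)).
have le_err0 : (D ((Sfp `&` Sfn') `*` [set false]) <= D (Sfp `*` [set false]))%E.
  by apply: le_measure; rewrite ?inE; [exact: m_err0 | exact: mX | move=> -[x y] /= [[]]].
have le_err1 : (D ((Sfp' `&` Sfn) `*` [set true]) <= D (Sfn `*` [set true]))%E.
  by apply: le_measure; rewrite ?inE; [exact: m_err1 | exact: mX | move=> -[x y] /= [[]]].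
apply: (le_trans (leeD le_err0 le_err1)).
rewrite (measureX_condm D false Sfp normal_gt0) (measureX_condm D true Sfn anomal_gt0).
apply: (le_trans (leeD (lee_wpmul2l _ fp_le) (lee_wpmul2l _ fn_le))).
  1-2: by rewrite lee_fin fine_ge0.
rewrite -EFinM -EFinM -EFinD lee_fin -[leRHS]mul1r -(class_masses_sum1 D) mulrDl.
by apply: lerD; apply: ler_wpM2l; rewrite ?fine_ge0// le_max lexx ?orbT.
Qed.

End Predictor.

Section Calibration.
Context {R : realType} {dX : measure_display} {X : measurableType dX}.
Context {dO : measure_display} {Omega : measurableType dO}.
Context {P : probability Omega R} {D : probability (X * bool)%type R}.
Context {n m : nat} {Z : 'I_n -> Omega -> X} {Z' : 'I_m -> Omega -> X}.
Hypotheses (iid : iid_calibration P D Z Z')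
  (normal_gt0 : (0 < D ([set: X] `*` [set false]))%E)
  (anomal_gt0 : (0 < D ([set: X] `*` [set true]))%E).

Let bigcap_preimage_setT k (W : 'I_k -> Omega -> X) :
  \bigcap_(j in [set: 'I_k]) (W j @^-1` setT) = setT.
Proof. by apply/seteqP; split=> // w _ j _. Qed.

Lemma iid_calibration_normal (A : 'I_n -> set X) : (forall i, measurable (A i)) ->
  P (\bigcap_(i in [set: 'I_n]) (Z i @^-1` A i)) = (\prod_(i < n) condm D false (A i))%E.
Proof.
move=> mA; case: iid => _ [_ joint].
rewrite -[X in P X]setIT -(bigcap_preimage_setT _ Z') joint// [X in (_ * X)%E]big1 ?mule1.
  by apply: eq_bigr => i _; rewrite Dcond_condm.
by move=> j _; rewrite Dcond_condm// condm_setT.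
Qed.

Lemma iid_calibration_anomalous (B : 'I_m -> set X) : (forall j, measurable (B j)) ->
  P (\bigcap_(j in [set: 'I_m]) (Z' j @^-1` B j)) = (\prod_(j < m) condm D true (B j))%E.
Proof.
move=> mB; case: iid => _ [_ joint].
rewrite -[X in P X]setTI -(bigcap_preimage_setT _ Z) joint// [X in (X * _)%E]big1 ?mul1e.
  by apply: eq_bigr => j _; rewrite Dcond_condm.
by move=> i _; rewrite Dcond_condm// condm_setT.
Qed.

End Calibration.

Lemma normal_mass_gt0 {R : realType} {dX : measure_display} {X : measurableType dX}
    (D : probability (X * bool)%type R) :
  (D ([set: X] `*` [set true]) < 1)%E -> (0 < D ([set: X] `*` [set false]))%E.
Proof.
have mass_fin b : D ([set: X] `*` [set b]) \is a fin_num.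
  by rewrite fin_num_measure//; exact: measurableX.
rewrite -(fineK (mass_fin true)) -(fineK (mass_fin false)) !lte_fin.
by have := class_masses_sum1 D; lra.
Qed.

Lemma probability_setC_setU_ge {R : realType} {d : measure_display} {T : measurableType d}
    (P : probability T R) (A B : set T) (a b : R) :
  measurable A -> measurable B -> (P A <= a%:E)%E -> (P B <= b%:E)%E ->
  ((1 - (a + b))%:E <= P (~` (A `|` B)))%E.
Proof.
move=> mA mB PA_le PB_le; rewrite probability_setC; last exact: measurableU.
rewrite EFinB; apply: leeB => //.
by rewrite EFinD (le_trans (measureU2 P mA mB))// leeD.
Qed.

Theorem mainTheorem6 (R : realType) (dX : measure_display) (X : measurableType dX)
    (sc : X -> R) (D : probability (X * bool)%type R)
    (eps_fp delta_fp eps_fn delta_fn : R) (n m : nat)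
    (dO : measure_display) (Omega : measurableType dO) (P : probability Omega R)
    (Z : 'I_n -> Omega -> X) (Z' : 'I_m -> Omega -> X) :
  measurable_fun setT sc ->
  (0 < D ([set: X] `*` [set true]))%E -> (D ([set: X] `*` [set true]) < 1)%E ->
  (forall (b : bool) (r : R), Dcond D b (sc @^-1` [set r]) = 0%E) ->
  0 < eps_fp < 1 -> 0 < delta_fp < 1 -> 0 < eps_fn < 1 -> 0 < delta_fn < 1 ->
  (0 < n)%N -> (0 < m)%N ->
  iid_calibration P D Z Z' ->
  exists F : set Omega, measurable F /\
    F `<=` [set w | (tau_fn sc (fun j => Z' j w) eps_fn delta_fn <
                     tau_fp sc (fun i => Z i w) eps_fp delta_fp)%E \/
                    (ERR D sc (tau_fn sc (fun j => Z' j w) eps_fn delta_fn)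
                              (tau_fp sc (fun i => Z i w) eps_fp delta_fp)
                     <= (Num.max eps_fp eps_fn)%:E)%E] /\
    ((1 - (delta_fp + delta_fn))%:E <= P F)%E.
Proof.
move=> msc anomal_gt0 anomal_lt1 atomD /andP[eps_fp_gt0 _] /andP[delta_fp_gt0 _]
  /andP[eps_fn_gt0 _] /andP[delta_fn_gt0 _] _ _ iid.
have normal_gt0 := normal_mass_gt0 D anomal_lt1.
have atomless b r : condm D b (sc @^-1` [set r]) = 0%E.
  by rewrite -Dcond_condm ?atomD// -[X in measurable X]setTI; exact: msc.
have [mZ [mZ' _]] := iid.
have [B_fp [mB_fp PB_fp fp_tail]] := tau_fp_tail P (condm_setT D false normal_gt0) mZ
  (iid_calibration_normal iid anomal_gt0) _ _ _ msc (atomless false)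
  eps_fp_gt0 (ltW delta_fp_gt0).
have [B_fn [mB_fn PB_fn fn_tail]] := tau_fn_tail P (condm_setT D true anomal_gt0) mZ'
  (iid_calibration_anomalous iid normal_gt0) _ _ _ msc (atomless true)
  eps_fn_gt0 (ltW delta_fn_gt0).
exists (~` (B_fp `|` B_fn)); split; first exact/measurableC/measurableU.
split; last exact: probability_setC_setU_ge.
move=> w /= /not_orP[/fp_tail fp_le /fn_tail fn_le]; right.
exact: ERR_le_max.
Qed.
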